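(* Let $(\tau_1,\tau_2)$ have a bivariate wide-sense geometric law with $\mathbb{P}(\tau_1>1)>0$ and $\mathbb{P}(\tau_2>1)>0$. Then the law of $(\tau_1,\tau_2)$ is a bivariate narrow-sense geometric law if and only if $\mathrm{Corr}[\tau_1,\tau_2]\ge0$. Explicitly, if $\mathrm{Corr}[\tau_1,\tau_2]\ge 0$ and $\tilde p_\emptyset>0$, then $(\tau_1,\tau_2)\sim\mathcal{G}^{\mathcal N}(p_{\{1\}},p_{\{2\}},p_{\{1,2\}})$ with $$p_{\{1\}}=\frac{\tilde p_\emptyset}{\tilde p_\emptyset+\tilde p_{\{1\}}},\quad p_{\{2\}}=\frac{\tilde p_\emptyset}{\tilde p_\emptyset+\tilde p_{\{2\}}},\quad p_{\{1,2\}}=\frac{(\tilde p_\emptyset+\tilde p_{\{1\}})(\tilde p_\emptyset+\tilde p_{\{2\}})}{\tilde p_\emptyset}.$$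
   Context: Narrow-sense law $\mathcal{G}^{\mathcal N}(\mathbf p)$ in dimension $2$: for $p_{\{1\}},p_{\{2\}},p_{\{1,2\}}\in[0,1]$ with $p_{\{1\}}p_{\{1,2\}}<1$, $p_{\{2\}}p_{\{1,2\}}<1$, take independent $E_I$ with $\mathbb{P}(E_I>n)=p_I^n$ and $\tau_1=\min(E_{\{1\}},E_{\{1,2\}})$, $\tau_2=\min(E_{\{2\}},E_{\{1,2\}})$. Wide-sense law in dimension 2: for $\tilde p_I\in[0,1]$, $I\subseteq\{1,2\}$, summing to $1$ with $\sum_{I\not\ni k}\tilde p_I<1$ ($k=1,2$), run i.i.d. trials with outcome $I$ of probability $\tilde p_I$, let $\tilde E_I$ be the first trial with outcome $I$, and $\tau_k=\min\{\tilde E_I:k\in I\}$; then $\mathbb{P}(\tau_1>i,\tau_2>j)=(\tilde p_\emptyset+\tilde p_{\{2\}})^{i-j}\tilde p_\emptyset^j$ for $i\ge j$ and $(\tilde p_\emptyset+\tilde p_{\{1\}})^{j-i}\tilde p_\emptyset^i$ for $i<j$. *)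

From Stdlib Require Import Reals Lra Lia Arith ClassicalEpsilon.
Open Scope R_scope.

(* A law of an N-valued random pair (tau1,tau2) (values in {1,2,...}) is
   represented by its joint survival function
   S i j = P(tau1 > i, tau2 > j), for i j : nat (this determines the law). *)
Definition survival := nat -> nat -> R.

(* Wide-sense geometric law: survival function given explicitly in the paper,
   with parameters q0 = p~_empty, q1 = p~_{1}, q2 = p~_{2}, q12 = p~_{1,2}. *)
Definition wide_params (q0 q1 q2 q12 : R) : Prop :=
  0 <= q0 <= 1 /\ 0 <= q1 <= 1 /\ 0 <= q2 <= 1 /\ 0 <= q12 <= 1 /\
  q0 + q1 + q2 + q12 = 1 /\
  q0 + q2 < 1 /\ q0 + q1 < 1.

Definition wide_survival (q0 q1 q2 q12 : R) : survival :=
  fun i j => if (j <=? i)%nat then (q0 + q2) ^ (i - j) * q0 ^ j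
             else (q0 + q1) ^ (j - i) * q0 ^ i.

(* Narrow-sense geometric law G^N(p1,p2,p12): tau1 = min(E1,E12),
   tau2 = min(E2,E12) with independent E_I, P(E_I > n) = p_I^n; by
   independence P(tau1>i, tau2>j) = P(E1>i) P(E2>j) P(E12>max i j). *)
Definition narrow_params (p1 p2 p12 : R) : Prop :=
  0 <= p1 <= 1 /\ 0 <= p2 <= 1 /\ 0 <= p12 <= 1 /\
  p1 * p12 < 1 /\ p2 * p12 < 1.

Definition narrow_survival (p1 p2 p12 : R) : survival :=
  fun i j => p1 ^ i * p2 ^ j * p12 ^ (Nat.max i j).

(* point masses: P(tau1 = i, tau2 = j) for i, j >= 1 *)
Definition pmf (Sv : survival) (i j : nat) : R :=
  Sv (i - 1)%nat (j - 1)%nat - Sv i (j - 1)%nat - Sv (i - 1)%nat j + Sv i j.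

(* limit of a real sequence (if it converges; arbitrary otherwise) *)
Definition Rlim (u : nat -> R) : R :=
  epsilon (inhabits 0) (fun l => Un_cv u l).

(* E[f(tau1,tau2)] = sum over i,j >= 1 of f(i,j) P(tau1=i,tau2=j),
   the double series of nonnegative-mass terms taken as the limit of
   partial sums over the squares {1..N}^2. *)
Definition expect (Sv : survival) (f : nat -> nat -> R) : R :=
  Rlim (fun N => sum_f_R0 (fun a =>
          sum_f_R0 (fun b => f (S a) (S b) * pmf Sv (S a) (S b)) N) N).

Definition tau1 (i j : nat) : R := INR i.
Definition tau2 (i j : nat) : R := INR j.

Definition Cov (Sv : survival) : R :=
  expect Sv (fun i j => INR i * INR j) - expect Sv tau1 * expect Sv tau2.
Definition Var1 (Sv : survival) : R :=
  expect Sv (fun i j => INR i * INR i) - expect Sv tau1 ^ 2.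
Definition Var2 (Sv : survival) : R :=
  expect Sv (fun i j => INR j * INR j) - expect Sv tau2 ^ 2.
Definition Corr (Sv : survival) : R := Cov Sv / sqrt (Var1 Sv * Var2 Sv).

From Stdlib Require Import Reals Lra Lia ClassicalEpsilon FunctionalExtensionality.
Open Scope R_scope.

(* With a = p~0 + p~{2} and b = p~0 + p~{1}, the wide-sense survival function is
   a^(i-j) p~0^j for i >= j and b^(j-i) p~0^i otherwise.  It has the narrow-sense
   form p1^i p2^j p12^(max i j) iff p1 p12 = a, p2 p12 = b and p1 p2 p12 = p~0,
   which forces a b = p~0 p12 <= p~0; conversely, if a b <= p~0 these equations
   are solved by the explicit parameters of the statement.  On the other side,
   summation by parts expresses the truncated moments through the survival
   function, up to boundary terms of size O(N^2 c^N) with c = max a b < 1; this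
   gives E[tau1] = 1/(1-a), Var[tau1] = a/(1-a)^2 and
   E[tau1 tau2] = (1/(1-a) + 1/(1-b) - 1)/(1 - p~0), hence
   Cov = (p~0 - a b) / ((1 - p~0)(1 - a)(1 - b)), whose sign is that of p~0 - a b. *)

Lemma sum_f_R0_mult_l (c : R) (f : nat -> R) (N : nat) :
  sum_f_R0 (fun k => c * f k) N = c * sum_f_R0 f N.
Proof. induction N as [|N IH]; cbn [sum_f_R0]; [|rewrite IH]; ring. Qed.

Lemma sum_f_R0_telescope (X : nat -> R) (N : nat) :
  sum_f_R0 (fun k => X k - X (S k)) N = X 0%nat - X (S N).
Proof. induction N as [|N IH]; cbn [sum_f_R0]; [|rewrite IH]; ring. Qed.

Lemma sum_f_R0_by_parts (u X : nat -> R) (N : nat) :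
  sum_f_R0 (fun k => u (S k) * (X k - X (S k))) N
  = sum_f_R0 (fun k => (u (S k) - u k) * X k) N + u 0%nat * X 0%nat - u (S N) * X (S N).
Proof. induction N as [|N IH]; cbn [sum_f_R0]; [|rewrite IH]; ring. Qed.

Lemma sum_f_R0_comm (g : nat -> nat -> R) (n m : nat) :
  sum_f_R0 (fun a => sum_f_R0 (fun b => g a b) m) n
  = sum_f_R0 (fun b => sum_f_R0 (fun a => g a b) n) m.
Proof.
  induction n as [|n IH]; cbn [sum_f_R0]; [reflexivity|].
  rewrite IH, <- plus_sum. reflexivity.
Qed.

Lemma sum_f_R0_bounds (f : nat -> R) (B : R) (N : nat) :
  (forall k, (k <= N)%nat -> 0 <= f k <= B) -> 0 <= sum_f_R0 f N <= INR (S N) * B.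
Proof.
  induction N as [|N IH]; intro Hf; cbn [sum_f_R0].
  - specialize (Hf 0%nat (le_n 0)). simpl. lra.
  - assert (HN := IH (fun k Hk => Hf k (le_S _ _ Hk))).
    specialize (Hf (S N) (le_n _)). rewrite (S_INR (S N)). lra.
Qed.

Lemma geom_sum (x : R) (N : nat) : x <> 1 ->
  sum_f_R0 (fun k => x ^ k) N = (1 - x ^ S N) / (1 - x).
Proof.
  intro Hx. induction N as [|N IH]; cbn [sum_f_R0]; [|rewrite IH]; simpl; field; lra.
Qed.

Lemma odd_geom_sum (x : R) (N : nat) : x <> 1 ->
  sum_f_R0 (fun k => (2 * INR k + 1) * x ^ k) N
  = (1 + x - (2 * INR N + 3) * x ^ S N + (2 * INR N + 1) * x ^ S (S N)) / (1 - x) ^ 2.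
Proof.
  intro Hx. induction N as [|N IH]; cbn [sum_f_R0]; [|rewrite IH, S_INR]; simpl; field; lra.
Qed.

Definition partial_expect (Sv : survival) (f : nat -> nat -> R) (N : nat) : R :=
  sum_f_R0 (fun a => sum_f_R0 (fun b => f (S a) (S b) * pmf Sv (S a) (S b)) N) N.

Lemma pmf_succ (Sv : survival) (a b : nat) :
  pmf Sv (S a) (S b) = (Sv a b - Sv (S a) b) - (Sv a (S b) - Sv (S a) (S b)).
Proof. unfold pmf. rewrite !Nat.sub_succ, !Nat.sub_0_r. ring. Qed.

Lemma partial_expect_marginal (Sv : survival) (u : nat -> R) (N : nat) : u 0%nat = 0 ->
  partial_expect Sv (fun i _ => u i) N
  = sum_f_R0 (fun k => (u (S k) - u k) * (Sv k 0%nat - Sv k (S N))) N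
    - u (S N) * (Sv (S N) 0%nat - Sv (S N) (S N)).
Proof.
  intro u0. unfold partial_expect.
  set (X := fun i => Sv i 0%nat - Sv i (S N)).
  rewrite (sum_eq _ (fun a => u (S a) * (X a - X (S a)))).
  - rewrite sum_f_R0_by_parts, u0. unfold X. ring.
  - intros a _.
    rewrite (sum_eq _ (fun b => u (S a) * ((Sv a b - Sv (S a) b) - (Sv a (S b) - Sv (S a) (S b))))).
    + rewrite sum_f_R0_mult_l, (sum_f_R0_telescope (fun b => Sv a b - Sv (S a) b)). unfold X. ring.
    + intros b _. now rewrite pmf_succ.
Qed.

Lemma partial_expect_mul (Sv : survival) (N : nat) :
  partial_expect Sv (fun i j => INR i * INR j) N
  = sum_f_R0 (fun i => sum_f_R0 (fun j => Sv i j) N) N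
    - INR (S N) * (sum_f_R0 (fun i => Sv i (S N)) N + sum_f_R0 (fun j => Sv (S N) j) N)
    + INR (S N) * INR (S N) * Sv (S N) (S N).
Proof.
  unfold partial_expect.
  set (Z := fun i => sum_f_R0 (fun j => Sv i j) N - INR (S N) * Sv i (S N)).
  assert (Hby_parts : forall X : nat -> R,
    sum_f_R0 (fun k => INR (S k) * (X k - X (S k))) N = sum_f_R0 X N - INR (S N) * X (S N)).
  { intro X. rewrite sum_f_R0_by_parts, INR_0, (sum_eq _ X); [ring|].
    intros k _. rewrite S_INR. ring. }
  rewrite (sum_eq _ (fun a => INR (S a) * (Z a - Z (S a)))).
  - rewrite Hby_parts. unfold Z. rewrite minus_sum, sum_f_R0_mult_l. ring.
  - intros a _. set (Y := fun j => Sv a j - Sv (S a) j).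
    rewrite (sum_eq _ (fun b => INR (S a) * (INR (S b) * (Y b - Y (S b))))).
    + rewrite sum_f_R0_mult_l, Hby_parts. unfold Y, Z.
      rewrite (minus_sum (fun j => Sv a j) (fun j => Sv (S a) j)). ring.
    + intros b _. unfold Y. rewrite pmf_succ. ring.
Qed.

Lemma expect_swap (Sv : survival) (f : nat -> nat -> R) :
  expect (fun i j => Sv j i) (fun i j => f j i) = expect Sv f.
Proof.
  change (Rlim (partial_expect (fun i j => Sv j i) (fun i j => f j i))
          = Rlim (partial_expect Sv f)).
  f_equal. extensionality N. unfold partial_expect.
  rewrite sum_f_R0_comm. apply sum_eq; intros a _; apply sum_eq; intros b _.
  unfold pmf. ring.
Qed.

Definition quad_geom (c : R) (N : nat) : R := INR (S N) ^ 2 * c ^ N.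

Lemma succ_mul_pow_le (d : R) (n : nat) : 0 < d < 1 -> INR (S n) * d ^ n <= 2 / (1 - d).
Proof.
  intro Hd. set (h := / d - 1).
  assert (Hhd : h * d = 1 - d) by (unfold h; field; lra).
  assert (Hh : 0 < h) by (apply (Rmult_lt_reg_r d); lra).
  assert (Hdn : 0 < d ^ n <= 1).
  { split; [apply pow_lt; lra|]. rewrite <- (pow1 n). apply pow_incr; lra. }
  (* Bernoulli: d^-n = (1 + h)^n >= 1 + n h *)
  assert (Hbern : (1 + INR n * h) * d ^ n <= 1).
  { replace 1 with ((1 + h) ^ n * d ^ n) at 2.
    - apply Rmult_le_compat_r; [lra | exact (poly n h Hh)].
    - rewrite <- Rpow_mult_distr. replace ((1 + h) * d) with 1 by lra. apply pow1. }
  rewrite S_INR. apply (Rmult_le_reg_r (1 - d)); [lra|].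
  replace (2 / (1 - d) * (1 - d)) with 2 by (field; lra).
  pose proof (pos_INR n). nra.
Qed.

Lemma quad_geom_nonneg (c : R) (N : nat) : 0 <= c -> 0 <= quad_geom c N.
Proof.
  intro Hc. unfold quad_geom. apply Rmult_le_pos; apply pow_le; [apply pos_INR | exact Hc].
Qed.

Lemma Un_cv_quad_geom (c : R) : 0 <= c < 1 -> Un_cv (quad_geom c) 0.
Proof.
  intro Hc. set (d := sqrt ((1 + c) / 2)).
  assert (Hd2 : d * d = (1 + c) / 2) by (apply sqrt_sqrt; lra).
  assert (Hd : 0 < d < 1).
  { split; [apply sqrt_lt_R0; lra|].
    rewrite <- sqrt_1. apply sqrt_lt_1; lra. }
  set (r := c / (d * d)).
  assert (Hr : 0 <= r < 1).
  { unfold r. rewrite Hd2.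
    split; [unfold Rdiv; apply Rmult_le_pos; [lra | left; apply Rinv_0_lt_compat; lra]|].
    apply (Rmult_lt_reg_r ((1 + c) / 2)); [lra|]. field_simplify; lra. }
  set (M := (2 / (1 - d)) ^ 2).
  assert (HM : 0 < M) by (apply pow_lt, Rdiv_lt_0_compat; lra).
  (* c^N = (d^2)^N r^N, and N d^N stays bounded *)
  assert (Hbound : forall N, quad_geom c N <= M * r ^ N).
  { intro N. unfold quad_geom, M.
    replace (c ^ N) with ((d ^ N) ^ 2 * r ^ N).
    2:{ replace ((d ^ N) ^ 2) with ((d * d) ^ N) by (rewrite Rpow_mult_distr; ring).
        rewrite <- Rpow_mult_distr. f_equal. unfold r. field. lra. }
    replace (INR (S N) ^ 2 * ((d ^ N) ^ 2 * r ^ N)) with ((INR (S N) * d ^ N) ^ 2 * r ^ N) by ring.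
    apply Rmult_le_compat_r; [apply pow_le; lra|].
    apply pow_incr. split.
    - apply Rmult_le_pos; [apply pos_INR | apply pow_le; lra].
    - apply succ_mul_pow_le; lra. }
  intros eps Heps.
  destruct (pow_lt_1_zero r ltac:(rewrite Rabs_pos_eq; lra) (eps / M))
    as [N HN]; [apply Rdiv_lt_0_compat; lra|].
  exists N. intros n Hn. unfold R_dist.
  rewrite Rminus_0_r, Rabs_pos_eq by (apply quad_geom_nonneg; lra).
  specialize (HN n Hn). rewrite Rabs_pos_eq in HN by (apply pow_le; lra).
  apply (Rle_lt_trans _ _ _ (Hbound n)).
  replace eps with (M * (eps / M)) by (field; lra).
  apply Rmult_lt_compat_l; lra.
Qed.

Lemma Rlim_eq (u : nat -> R) (l : R) : Un_cv u l -> Rlim u = l.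
Proof.
  intro Hu. unfold Rlim.
  apply (UL_sequence u); [|exact Hu].
  exact (epsilon_spec (inhabits 0) (fun l => Un_cv u l) (ex_intro _ l Hu)).
Qed.

Lemma expect_of_geometric_approx (Sv : survival) (f : nat -> nat -> R) (m : nat -> R)
    (L K1 K2 c : R) :
  0 <= c < 1 ->
  (forall N, Rabs (partial_expect Sv f N - m N) <= K1 * quad_geom c N) ->
  (forall N, Rabs (m N - L) <= K2 * quad_geom c N) ->
  expect Sv f = L.
Proof.
  intros Hc H1 H2. apply Rlim_eq. intros eps Heps.
  set (K := Rabs K1 + Rabs K2 + 1).
  assert (HK : 0 < K) by (unfold K; pose proof (Rabs_pos K1); pose proof (Rabs_pos K2); lra).
  destruct (Un_cv_quad_geom c Hc (eps / K)) as [N HN]; [apply Rdiv_lt_0_compat; lra|].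
  exists N. intros n Hn. specialize (HN n Hn). specialize (H1 n). specialize (H2 n).
  unfold R_dist in *. rewrite Rminus_0_r, Rabs_pos_eq in HN by (apply quad_geom_nonneg; lra).
  pose proof (quad_geom_nonneg c n ltac:(lra)) as Hq.
  set (q := quad_geom c n) in *.
  assert (Hsplit : Rabs (partial_expect Sv f n - L) <= (Rabs K1 + Rabs K2) * q).
  { replace (partial_expect Sv f n - L) with ((partial_expect Sv f n - m n) + (m n - L)) by ring.
    eapply Rle_trans; [apply Rabs_triang|].
    assert (K1 * q <= Rabs K1 * q) by (apply Rmult_le_compat_r; [exact Hq | apply Rle_abs]).
    assert (K2 * q <= Rabs K2 * q) by (apply Rmult_le_compat_r; [exact Hq | apply Rle_abs]).
    lra. }
  apply (Rle_lt_trans _ _ _ Hsplit).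
  apply (Rle_lt_trans _ (K * q)); [apply Rmult_le_compat_r; unfold K; lra|].
  replace eps with (K * (eps / K)) by (field; lra).
  apply Rmult_lt_compat_l; lra.
Qed.

Lemma pow_succ_le_quad_geom (c : R) (N : nat) :
  0 <= c <= 1 -> c ^ S N <= c ^ N <= quad_geom c N.
Proof.
  intro Hc. pose proof (pow_le c N (proj1 Hc)).
  assert (Hm : 1 <= INR (S N) ^ 2) by (rewrite S_INR; pose proof (pos_INR N); nra).
  unfold quad_geom. simpl pow at 1. split; nra.
Qed.

Section Geometric_domination.

Variables (Sv : survival) (c : R).
Hypothesis c_range : 0 <= c <= 1.
Hypothesis Sv_dominated : forall i j, 0 <= Sv i j <= c ^ Nat.max i j.

Lemma Sv_on_boundary (N k : nat) : (k <= S N)%nat ->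
  (0 <= Sv k (S N) <= c ^ S N) /\ (0 <= Sv (S N) k <= c ^ S N).
Proof.
  intro Hk. split.
  - rewrite <- (Nat.max_r k (S N)) at 3 by exact Hk. apply Sv_dominated.
  - rewrite <- (Nat.max_l (S N) k) at 3 by exact Hk. apply Sv_dominated.
Qed.

Lemma partial_expect_marginal_error (u : nat -> R) (N : nat) : u 0%nat = 0 ->
  (forall k, 0 <= u (S k) - u k <= 2 * INR k + 1) ->
  (forall n, 0 <= u n <= INR n ^ 2) ->
  Rabs (partial_expect Sv (fun i _ => u i) N
        - sum_f_R0 (fun k => (u (S k) - u k) * Sv k 0%nat) N) <= 3 * quad_geom c N.
Proof.
  intros u0 Hdu Hu.
  rewrite partial_expect_marginal by exact u0.
  rewrite (sum_eq _ (fun k => (u (S k) - u k) * Sv k 0%nat - (u (S k) - u k) * Sv k (S N)))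
    by (intros; ring).
  rewrite minus_sum.
  set (B := sum_f_R0 (fun k => (u (S k) - u k) * Sv k (S N)) N).
  assert (HB : 0 <= B <= INR (S N) * ((2 * INR N + 1) * c ^ S N)).
  { apply sum_f_R0_bounds. intros k Hk.
    destruct (Sv_on_boundary N k ltac:(lia)) as [Hs _].
    specialize (Hdu k). assert (INR k <= INR N) by (apply le_INR; exact Hk).
    split; [apply Rmult_le_pos|]; nra. }
  destruct (Sv_on_boundary N 0 ltac:(lia)) as [_ H0].
  destruct (Sv_on_boundary N (S N) ltac:(lia)) as [_ HN].
  specialize (Hu (S N)).
  pose proof (pow_succ_le_quad_geom c N c_range) as Hq.
  set (D := Sv (S N) 0%nat - Sv (S N) (S N)).
  match goal with |- Rabs ?e <= _ => replace e with (- B - u (S N) * D) by ring end.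
  unfold quad_geom in *. rewrite S_INR in *.
  pose proof (pos_INR N).
  set (m := INR N) in *. set (s := c ^ S N) in *.
  assert (HuD : Rabs (u (S N) * D) <= (m + 1) ^ 2 * s).
  { rewrite Rabs_mult, (Rabs_pos_eq (u (S N))) by lra.
    apply Rmult_le_compat; try lra; [apply Rabs_pos | apply Rabs_le; unfold D; lra]. }
  assert ((m + 1) ^ 2 * s <= (m + 1) ^ 2 * c ^ N) by (apply Rmult_le_compat_l; nra).
  eapply Rle_trans; [apply Rabs_triang|]. rewrite Rabs_Ropp, Rabs_pos_eq by lra.
  rewrite Rabs_Ropp.
  assert (0 <= m * s) by (apply Rmult_le_pos; lra).
  assert ((m + 1) * ((2 * m + 1) * s) <= 2 * ((m + 1) ^ 2 * s)) by nra.
  lra.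
Qed.

Lemma partial_expect_mul_error (N : nat) :
  Rabs (partial_expect Sv (fun i j => INR i * INR j) N
        - sum_f_R0 (fun i => sum_f_R0 (fun j => Sv i j) N) N) <= 3 * quad_geom c N.
Proof.
  rewrite partial_expect_mul.
  assert (Hcol : 0 <= sum_f_R0 (fun i => Sv i (S N)) N <= INR (S N) * c ^ S N).
  { apply sum_f_R0_bounds. intros k Hk. apply (Sv_on_boundary N k). lia. }
  assert (Hrow : 0 <= sum_f_R0 (fun j => Sv (S N) j) N <= INR (S N) * c ^ S N).
  { apply sum_f_R0_bounds. intros k Hk. apply (Sv_on_boundary N k). lia. }
  destruct (Sv_on_boundary N (S N) ltac:(lia)) as [_ HN].
  pose proof (pow_succ_le_quad_geom c N c_range) as Hq.
  unfold quad_geom in *.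
  set (m := INR (S N)) in *. set (s := c ^ S N) in *.
  assert (Hm : 1 <= m) by (unfold m; rewrite S_INR; pose proof (pos_INR N); lra).
  apply Rabs_le. split; nra.
Qed.

End Geometric_domination.

Lemma geom_sum_error (x c : R) (N : nat) : 0 <= x <= c -> c < 1 ->
  Rabs (sum_f_R0 (fun k => x ^ k) N - 1 / (1 - x)) <= / (1 - x) * quad_geom c N.
Proof.
  intros Hx Hc. rewrite geom_sum by lra.
  replace ((1 - x ^ S N) / (1 - x) - 1 / (1 - x)) with (- (/ (1 - x) * x ^ S N)) by (field; lra).
  assert (Hinv : 0 < / (1 - x)) by (apply Rinv_0_lt_compat; lra).
  assert (Hxc : 0 <= x ^ S N <= c ^ S N) by (split; [apply pow_le | apply pow_incr]; lra).
  pose proof (pow_succ_le_quad_geom c N ltac:(lra)).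
  rewrite Rabs_Ropp, Rabs_pos_eq by (apply Rmult_le_pos; lra).
  apply Rmult_le_compat_l; lra.
Qed.

Lemma odd_geom_sum_error (x c : R) (N : nat) : 0 <= x <= c -> c < 1 ->
  Rabs (sum_f_R0 (fun k => (2 * INR k + 1) * x ^ k) N - (1 + x) / (1 - x) ^ 2)
  <= 4 / (1 - x) ^ 2 * quad_geom c N.
Proof.
  intros Hx Hc. rewrite odd_geom_sum by lra.
  assert (Hinv : 0 < / (1 - x) ^ 2) by (apply Rinv_0_lt_compat, pow_lt; lra).
  assert (Hxc : 0 <= x ^ S N <= c ^ S N) by (split; [apply pow_le | apply pow_incr]; lra).
  pose proof (pow_succ_le_quad_geom c N ltac:(lra)) as Hq.
  change (x ^ S (S N)) with (x * x ^ S N).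
  unfold quad_geom in *. rewrite S_INR in *. pose proof (pos_INR N).
  set (m := INR N) in *. set (t := x ^ S N) in *.
  replace ((1 + x - (2 * m + 3) * t + (2 * m + 1) * (x * t)) / (1 - x) ^ 2
           - (1 + x) / (1 - x) ^ 2)
    with (/ (1 - x) ^ 2 * ((2 * m + 1) * (x * t) - (2 * m + 3) * t)) by (field; lra).
  rewrite Rabs_mult, Rabs_pos_eq by lra.
  unfold Rdiv. rewrite (Rmult_comm 4), Rmult_assoc.
  apply Rmult_le_compat_l; [lra|].
  assert (0 <= x * t <= t) by nra.
  apply Rabs_le. split; nra.
Qed.

Definition pow_conv (x y : R) (N : nat) : R := sum_f_R0 (fun j => x ^ j * y ^ (N - j)) N.

Lemma pow_conv_succ (x y : R) (N : nat) : pow_conv x y (S N) = x ^ S N + y * pow_conv x y N.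
Proof.
  unfold pow_conv. cbn [sum_f_R0]. rewrite Nat.sub_diag, <- sum_f_R0_mult_l.
  rewrite (sum_eq _ (fun j => y * (x ^ j * y ^ (N - j)))); [simpl; ring|].
  intros j Hj. replace (S N - j)%nat with (S (N - j)) by lia. simpl. ring.
Qed.

Lemma pow_conv_bounds (x y c : R) (N : nat) : 0 <= x <= c -> 0 <= y <= c ->
  0 <= pow_conv x y N <= INR (S N) * c ^ N.
Proof.
  intros Hx Hy. apply sum_f_R0_bounds. intros j Hj.
  replace (c ^ N) with (c ^ j * c ^ (N - j)) by (rewrite <- pow_add; f_equal; lia).
  split; [apply Rmult_le_pos; apply pow_le; lra|].
  apply Rmult_le_compat; try (apply pow_le; lra); apply pow_incr; lra.
Qed.

Section Wide_law.

Variables q0 q1 q2 q12 : R.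

Local Notation Sw := (wide_survival q0 q1 q2 q12).

Lemma wide_survival_row0 (i : nat) : Sw i 0%nat = (q0 + q2) ^ i.
Proof. unfold wide_survival. simpl. rewrite Nat.sub_0_r. ring. Qed.

Lemma wide_survival_col0 (j : nat) : Sw 0%nat j = (q0 + q1) ^ j.
Proof. unfold wide_survival. destruct j; simpl; ring. Qed.

Lemma wide_survival_diag (n : nat) : Sw n n = q0 ^ n.
Proof. unfold wide_survival. rewrite Nat.leb_refl, Nat.sub_diag. simpl. ring. Qed.

Lemma wide_survival_last_row (N j : nat) : (j <= N)%nat ->
  Sw (S N) j = (q0 + q2) * (q0 ^ j * (q0 + q2) ^ (N - j)).
Proof.
  intro Hj. unfold wide_survival.
  replace (j <=? S N)%nat with true by (symmetry; apply Nat.leb_le; lia).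
  replace (S N - j)%nat with (S (N - j)) by lia. simpl. ring.
Qed.

Lemma wide_survival_last_col (N i : nat) : (i <= N)%nat ->
  Sw i (S N) = (q0 + q1) * (q0 ^ i * (q0 + q1) ^ (N - i)).
Proof.
  intro Hi. unfold wide_survival.
  replace (S N <=? i)%nat with false by (symmetry; apply Nat.leb_gt; lia).
  replace (S N - i)%nat with (S (N - i)) by lia. simpl. ring.
Qed.

Lemma wide_square_sum_succ (N : nat) :
  sum_f_R0 (fun i => sum_f_R0 (fun j => Sw i j) (S N)) (S N)
  = sum_f_R0 (fun i => sum_f_R0 (fun j => Sw i j) N) N
    + (q0 + q1) * pow_conv q0 (q0 + q1) N + (q0 + q2) * pow_conv q0 (q0 + q2) N + q0 ^ S N.
Proof.
  cbn [sum_f_R0]. rewrite plus_sum, <- (wide_survival_diag (S N)).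
  rewrite (sum_eq (fun i => Sw i (S N)) (fun i => (q0 + q1) * (q0 ^ i * (q0 + q1) ^ (N - i))))
    by (intros; apply wide_survival_last_col; assumption).
  rewrite (sum_eq (fun j => Sw (S N) j) (fun j => (q0 + q2) * (q0 ^ j * (q0 + q2) ^ (N - j))))
    by (intros; apply wide_survival_last_row; assumption).
  unfold pow_conv. rewrite !sum_f_R0_mult_l. ring.
Qed.

Hypothesis wide : wide_params q0 q1 q2 q12.

Lemma wide_rate_bounds :
  0 <= q0 <= Rmax (q0 + q2) (q0 + q1) /\ 0 <= q0 + q2 <= Rmax (q0 + q2) (q0 + q1) /\
  0 <= q0 + q1 <= Rmax (q0 + q2) (q0 + q1) /\ Rmax (q0 + q2) (q0 + q1) < 1.
Proof.
  destruct wide as [[H0 _] [[H1 _] [[H2 _] [_ [_ [Ha Hb]]]]]].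
  pose proof (Rmax_l (q0 + q2) (q0 + q1)). pose proof (Rmax_r (q0 + q2) (q0 + q1)).
  repeat split; try lra. apply Rmax_lub_lt; lra.
Qed.

Local Notation c := (Rmax (q0 + q2) (q0 + q1)).

Lemma wide_survival_dominated (i j : nat) : 0 <= Sw i j <= c ^ Nat.max i j.
Proof.
  destruct wide_rate_bounds as (Hq0 & Ha & Hb & _).
  assert (Hpow : forall x y (n m : nat), 0 <= x <= c -> 0 <= y <= c ->
            0 <= x ^ n * y ^ m <= c ^ (n + m)).
  { intros x y n m Hx Hy. rewrite pow_add.
    split; [apply Rmult_le_pos; apply pow_le; lra|].
    apply Rmult_le_compat; try (apply pow_le; lra); apply pow_incr; lra. }
  unfold wide_survival. destruct (j <=? i)%nat eqn:E.
  - apply Nat.leb_le in E. replace (Nat.max i j) with (i - j + j)%nat by lia. auto.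
  - apply Nat.leb_gt in E. replace (Nat.max i j) with (j - i + i)%nat by lia. auto.
Qed.

Lemma wide_square_sum (N : nat) :
  sum_f_R0 (fun i => sum_f_R0 (fun j => Sw i j) N) N
  = sum_f_R0 (fun k => q0 ^ k) N
    + (q0 + q2) / (1 - (q0 + q2)) * (sum_f_R0 (fun k => q0 ^ k) N - pow_conv q0 (q0 + q2) N)
    + (q0 + q1) / (1 - (q0 + q1)) * (sum_f_R0 (fun k => q0 ^ k) N - pow_conv q0 (q0 + q1) N).
Proof.
  destruct wide as (_ & _ & _ & _ & _ & Ha & Hb).
  induction N as [|N IH].
  - unfold pow_conv. simpl. rewrite wide_survival_diag. simpl. field. split; lra.
  - rewrite wide_square_sum_succ, IH, !pow_conv_succ. cbn [sum_f_R0]. field. split; lra.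
Qed.

Lemma wide_square_sum_error (N : nat) :
  Rabs (sum_f_R0 (fun i => sum_f_R0 (fun j => Sw i j) N) N
        - (1 / (1 - (q0 + q2)) + 1 / (1 - (q0 + q1)) - 1) / (1 - q0))
  <= ((1 + (q0 + q2) / (1 - (q0 + q2)) + (q0 + q1) / (1 - (q0 + q1))) / (1 - q0)
      + (q0 + q2) / (1 - (q0 + q2)) + (q0 + q1) / (1 - (q0 + q1))) * quad_geom c N.
Proof.
  destruct wide_rate_bounds as (Hq0 & Ha & Hb & Hc).
  rewrite wide_square_sum.
  pose proof (geom_sum_error q0 c N Hq0 Hc) as HG.
  pose proof (pow_conv_bounds q0 (q0 + q2) c N Hq0 Ha) as HFa.
  pose proof (pow_conv_bounds q0 (q0 + q1) c N Hq0 Hb) as HFb.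
  assert (Hlin : INR (S N) * c ^ N <= quad_geom c N).
  { unfold quad_geom. pose proof (pow_le c N ltac:(lra)).
    assert (1 <= INR (S N)) by (rewrite S_INR; pose proof (pos_INR N); lra). nra. }
  assert (Hka : 0 <= (q0 + q2) / (1 - (q0 + q2)))
    by (apply Rmult_le_pos; [lra | left; apply Rinv_0_lt_compat; lra]).
  assert (Hkb : 0 <= (q0 + q1) / (1 - (q0 + q1)))
    by (apply Rmult_le_pos; [lra | left; apply Rinv_0_lt_compat; lra]).
  set (ka := (q0 + q2) / (1 - (q0 + q2))) in *.
  set (kb := (q0 + q1) / (1 - (q0 + q1))) in *.
  set (G := sum_f_R0 (fun k => q0 ^ k) N) in *.
  set (Fa := pow_conv q0 (q0 + q2) N) in *. set (Fb := pow_conv q0 (q0 + q1) N) in *.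
  set (q := quad_geom c N) in *.
  replace (G + ka * (G - Fa) + kb * (G - Fb)
           - (1 / (1 - (q0 + q2)) + 1 / (1 - (q0 + q1)) - 1) / (1 - q0))
    with ((1 + ka + kb) * (G - 1 / (1 - q0)) - ka * Fa - kb * Fb)
    by (unfold ka, kb; field; lra).
  replace (((1 + ka + kb) / (1 - q0) + ka + kb) * q)
    with ((1 + ka + kb) * (/ (1 - q0) * q) + ka * q + kb * q) by (field; lra).
  set (e := G - 1 / (1 - q0)) in *.
  pose proof (Rle_abs e). pose proof (Rle_abs (- e)). rewrite Rabs_Ropp in *.
  assert (ka * Fa <= ka * q) by (apply Rmult_le_compat_l; lra).
  assert (kb * Fb <= kb * q) by (apply Rmult_le_compat_l; lra).
  assert (0 <= ka * Fa) by (apply Rmult_le_pos; lra).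
  assert (0 <= kb * Fb) by (apply Rmult_le_pos; lra).
  apply Rabs_le. split; nra.
Qed.

Lemma expect_wide_tau1 : expect Sw tau1 = 1 / (1 - (q0 + q2)).
Proof.
  destruct wide_rate_bounds as (Hq0 & Ha & Hb & Hc).
  apply (expect_of_geometric_approx _ _
           (sum_f_R0 (fun k => (INR (S k) - INR k) * Sw k 0%nat)) _ 3 (/ (1 - (q0 + q2))) c);
    [lra | intro N ..].
  - apply (partial_expect_marginal_error Sw c ltac:(lra) wide_survival_dominated INR N eq_refl).
    + intro k. rewrite S_INR. pose proof (pos_INR k). lra.
    + intros [|n]; [simpl; lra|]. rewrite S_INR. pose proof (pos_INR n). nra.
  - rewrite (sum_eq _ (fun k => (q0 + q2) ^ k)); [apply geom_sum_error; lra|].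
    intros k _. rewrite S_INR, wide_survival_row0. ring.
Qed.

Lemma expect_wide_tau1_sq :
  expect Sw (fun i _ => INR i * INR i) = (1 + (q0 + q2)) / (1 - (q0 + q2)) ^ 2.
Proof.
  destruct wide_rate_bounds as (Hq0 & Ha & Hb & Hc).
  apply (expect_of_geometric_approx _ _
           (sum_f_R0 (fun k => (INR (S k) * INR (S k) - INR k * INR k) * Sw k 0%nat)) _ 3
           (4 / (1 - (q0 + q2)) ^ 2) c);
    [lra | intro N ..].
  - apply (partial_expect_marginal_error Sw c ltac:(lra) wide_survival_dominated
             (fun n => INR n * INR n) N ltac:(simpl; ring)).
    + intro k. rewrite S_INR. pose proof (pos_INR k). nra.
    + intro n. pose proof (pos_INR n). nra.
  - rewrite (sum_eq _ (fun k => (2 * INR k + 1) * (q0 + q2) ^ k));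
      [apply odd_geom_sum_error; lra|].
    intros k _. rewrite S_INR, wide_survival_row0. ring.
Qed.

Lemma expect_wide_mul :
  expect Sw (fun i j => INR i * INR j)
  = (1 / (1 - (q0 + q2)) + 1 / (1 - (q0 + q1)) - 1) / (1 - q0).
Proof.
  destruct wide_rate_bounds as (Hq0 & Ha & Hb & Hc).
  eapply (expect_of_geometric_approx _ _
           (fun N => sum_f_R0 (fun i => sum_f_R0 (fun j => Sw i j) N) N) _ 3 _ c).
  - lra.
  - intro N. exact (partial_expect_mul_error Sw c ltac:(lra) wide_survival_dominated N).
  - intro N. apply wide_square_sum_error.
Qed.

End Wide_law.

Lemma wide_survival_swap (q0 q1 q2 q12 : R) :
  (fun i j => wide_survival q0 q2 q1 q12 j i) = wide_survival q0 q1 q2 q12.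
Proof.
  extensionality i; extensionality j. unfold wide_survival.
  destruct (Nat.leb_spec i j), (Nat.leb_spec j i); try lia.
  - replace i with j by lia. rewrite Nat.sub_diag. reflexivity.
  - reflexivity.
  - reflexivity.
Qed.

Lemma wide_params_swap (q0 q1 q2 q12 : R) :
  wide_params q0 q1 q2 q12 -> wide_params q0 q2 q1 q12.
Proof. intros (H0 & H1 & H2 & H12 & Hsum & Ha & Hb). repeat split; lra. Qed.

Lemma expect_wide_tau2 (q0 q1 q2 q12 : R) : wide_params q0 q1 q2 q12 ->
  expect (wide_survival q0 q1 q2 q12) tau2 = 1 / (1 - (q0 + q1)).
Proof.
  intro Hw. rewrite <- wide_survival_swap.
  exact (eq_trans (expect_swap _ tau1) (expect_wide_tau1 _ _ _ _ (wide_params_swap _ _ _ _ Hw))).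
Qed.

Lemma expect_wide_tau2_sq (q0 q1 q2 q12 : R) : wide_params q0 q1 q2 q12 ->
  expect (wide_survival q0 q1 q2 q12) (fun _ j => INR j * INR j)
  = (1 + (q0 + q1)) / (1 - (q0 + q1)) ^ 2.
Proof.
  intro Hw. rewrite <- wide_survival_swap.
  exact (eq_trans (expect_swap _ (fun i _ => INR i * INR i))
                  (expect_wide_tau1_sq _ _ _ _ (wide_params_swap _ _ _ _ Hw))).
Qed.

Lemma Cov_wide (q0 q1 q2 q12 : R) : wide_params q0 q1 q2 q12 ->
  Cov (wide_survival q0 q1 q2 q12)
  = (q0 - (q0 + q2) * (q0 + q1)) / ((1 - q0) * (1 - (q0 + q2)) * (1 - (q0 + q1))).
Proof.
  intro Hw. unfold Cov.
  rewrite expect_wide_mul, expect_wide_tau1, expect_wide_tau2 by exact Hw.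
  destruct Hw as (_ & _ & [H2 _] & _ & _ & Ha & Hb). field. repeat split; lra.
Qed.

Lemma Var1_wide (q0 q1 q2 q12 : R) : wide_params q0 q1 q2 q12 ->
  Var1 (wide_survival q0 q1 q2 q12) = (q0 + q2) / (1 - (q0 + q2)) ^ 2.
Proof.
  intro Hw. unfold Var1.
  rewrite expect_wide_tau1_sq, expect_wide_tau1 by exact Hw.
  destruct Hw as (_ & _ & _ & _ & _ & Ha & Hb). field. lra.
Qed.

Lemma Var2_wide (q0 q1 q2 q12 : R) : wide_params q0 q1 q2 q12 ->
  Var2 (wide_survival q0 q1 q2 q12) = (q0 + q1) / (1 - (q0 + q1)) ^ 2.
Proof.
  intro Hw. unfold Var2.
  rewrite expect_wide_tau2_sq, expect_wide_tau2 by exact Hw.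
  destruct Hw as (_ & _ & _ & _ & _ & Ha & Hb). field. lra.
Qed.

Lemma Corr_wide_nonneg_iff (q0 q1 q2 q12 : R) : wide_params q0 q1 q2 q12 ->
  0 < q0 + q2 -> 0 < q0 + q1 ->
  Corr (wide_survival q0 q1 q2 q12) >= 0 <-> (q0 + q2) * (q0 + q1) <= q0.
Proof.
  intros Hw Ha0 Hb0. unfold Corr.
  rewrite Cov_wide, Var1_wide, Var2_wide by exact Hw.
  destruct Hw as (_ & _ & [H2 _] & _ & _ & Ha & Hb).
  assert (Hs : 0 < sqrt ((q0 + q2) / (1 - (q0 + q2)) ^ 2 * ((q0 + q1) / (1 - (q0 + q1)) ^ 2))).
  { apply sqrt_lt_R0, Rmult_lt_0_compat; apply Rdiv_lt_0_compat; try lra; apply pow_lt; lra. }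
  assert (HD : 0 < (1 - q0) * (1 - (q0 + q2)) * (1 - (q0 + q1))).
  { repeat apply Rmult_lt_0_compat; lra. }
  set (s := sqrt _) in *. set (D := (1 - q0) * (1 - (q0 + q2)) * (1 - (q0 + q1))) in *.
  replace ((q0 - (q0 + q2) * (q0 + q1)) / D / s)
    with ((q0 - (q0 + q2) * (q0 + q1)) * / (D * s)) by (field; lra).
  assert (Hpos : 0 < / (D * s)) by (apply Rinv_0_lt_compat, Rmult_lt_0_compat; lra).
  split; intro H.
  - destruct (Rle_or_lt ((q0 + q2) * (q0 + q1)) q0) as [|Hlt]; [assumption|]. nra.
  - apply Rle_ge, Rmult_le_pos; lra.
Qed.

Lemma wide_eq_narrow_iff (q0 q1 q2 q12 p1 p2 p12 : R) :
  (forall i j : nat, wide_survival q0 q1 q2 q12 i j = narrow_survival p1 p2 p12 i j) <->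
  p1 * p12 = q0 + q2 /\ p2 * p12 = q0 + q1 /\ p1 * p2 * p12 = q0.
Proof.
  split.
  - intro Heq.
    pose proof (Heq 1%nat 0%nat) as E10. pose proof (Heq 0%nat 1%nat) as E01.
    pose proof (Heq 1%nat 1%nat) as E11.
    rewrite wide_survival_row0 in E10. rewrite wide_survival_col0 in E01.
    rewrite wide_survival_diag in E11.
    unfold narrow_survival in *. simpl in *. repeat split; lra.
  - intros (E1 & E2 & E12) i j. unfold wide_survival, narrow_survival.
    destruct (Nat.leb_spec j i) as [Hji | Hij].
    + rewrite Nat.max_l by lia.
      replace (p1 ^ i) with (p1 ^ (i - j) * p1 ^ j) by (rewrite <- pow_add; f_equal; lia).
      replace (p12 ^ i) with (p12 ^ (i - j) * p12 ^ j) by (rewrite <- pow_add; f_equal; lia).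
      rewrite <- E1, <- E12, !Rpow_mult_distr. ring.
    + rewrite Nat.max_r by lia.
      replace (p2 ^ j) with (p2 ^ (j - i) * p2 ^ i) by (rewrite <- pow_add; f_equal; lia).
      replace (p12 ^ j) with (p12 ^ (j - i) * p12 ^ i) by (rewrite <- pow_add; f_equal; lia).
      rewrite <- E2, <- E12, !Rpow_mult_distr. ring.
Qed.

Lemma narrow_params_of_wide (q0 q1 q2 q12 : R) : wide_params q0 q1 q2 q12 -> 0 < q0 ->
  (q0 + q2) * (q0 + q1) <= q0 ->
  narrow_params (q0 / (q0 + q1)) (q0 / (q0 + q2)) ((q0 + q1) * (q0 + q2) / q0).
Proof.
  intros (_ & [H1 _] & [H2 _] & _ & _ & Ha & Hb) Hq0 Hab.
  assert (Hfrac : forall x y, 0 <= x <= y -> 0 < y -> 0 <= x / y <= 1).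
  { intros x y Hxy Hy. split.
    - apply Rmult_le_pos; [lra | left; apply Rinv_0_lt_compat; lra].
    - apply (Rmult_le_reg_r y); [lra|]. field_simplify; lra. }
  unfold narrow_params.
  replace (q0 / (q0 + q1) * ((q0 + q1) * (q0 + q2) / q0)) with (q0 + q2) by (field; lra).
  replace (q0 / (q0 + q2) * ((q0 + q1) * (q0 + q2) / q0)) with (q0 + q1) by (field; lra).
  repeat split; try lra; apply Hfrac; nra.
Qed.

Theorem mainTheorem9 (q0 q1 q2 q12 : R) :
  wide_params q0 q1 q2 q12 ->
  wide_survival q0 q1 q2 q12 1%nat 0%nat > 0 ->
  wide_survival q0 q1 q2 q12 0%nat 1%nat > 0 ->
  ((exists p1 p2 p12 : R, narrow_params p1 p2 p12 /\
      forall i j : nat, wide_survival q0 q1 q2 q12 i j = narrow_survival p1 p2 p12 i j)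
   <-> Corr (wide_survival q0 q1 q2 q12) >= 0)
  /\
  (Corr (wide_survival q0 q1 q2 q12) >= 0 -> q0 > 0 ->
     let p1 := q0 / (q0 + q1) in
     let p2 := q0 / (q0 + q2) in
     let p12 := (q0 + q1) * (q0 + q2) / q0 in
     narrow_params p1 p2 p12 /\
     forall i j : nat, wide_survival q0 q1 q2 q12 i j = narrow_survival p1 p2 p12 i j).
Proof.
  intros Hw H10 H01.
  rewrite wide_survival_row0 in H10. rewrite wide_survival_col0 in H01. simpl in H10, H01.
  assert (Ha : 0 < q0 + q2) by lra. assert (Hb : 0 < q0 + q1) by lra.
  pose proof (Corr_wide_nonneg_iff _ _ _ _ Hw Ha Hb) as Hcorr.
  assert (Hexplicit : Corr (wide_survival q0 q1 q2 q12) >= 0 -> q0 > 0 ->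
     let p1 := q0 / (q0 + q1) in
     let p2 := q0 / (q0 + q2) in
     let p12 := (q0 + q1) * (q0 + q2) / q0 in
     narrow_params p1 p2 p12 /\
     forall i j : nat, wide_survival q0 q1 q2 q12 i j = narrow_survival p1 p2 p12 i j).
  { intros HC Hq0 p1 p2 p12. apply Hcorr in HC. split.
    - exact (narrow_params_of_wide _ _ _ _ Hw Hq0 HC).
    - apply wide_eq_narrow_iff. unfold p1, p2, p12. repeat split; field; lra. }
  split; [split | exact Hexplicit].
  - intros (p1 & p2 & p12 & (_ & _ & [_ H12] & _) & Heq). apply Hcorr.
    apply wide_eq_narrow_iff in Heq as (E1 & E2 & E12).
    destruct Hw as ([H0 _] & _).
    replace ((q0 + q2) * (q0 + q1)) with (q0 * p12) by (rewrite <- E1, <- E2, <- E12; ring).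
    nra.
  - intro HC. assert (Hq0 : q0 > 0) by (apply Hcorr in HC; nra).
    do 3 eexists. exact (Hexplicit HC Hq0).
Qed.
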